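(* Let $\xi\in C^2(\mathbb S^1;\mathbb R^d)$ and $\sigma\in C^1(\mathbb S^1;\mathbb R)$ satisfy $$\partial_s(\sigma\partial_s\xi)+\xi=0,\qquad |\partial_s\xi|=1\ \text{on }\mathbb S^1.$$ Then $\xi$ is a plane curve (its image lies in a two-dimensional plane) whose curvature $k$, defined by $\partial_{ss}\xi=kN$ with $N$ the unit inner normal, satisfies $k(s)>0$ for all $s\in\mathbb S^1$.
   Context: $\mathbb S^1=\mathbb R/\mathbb Z$, $d\ge2$. *)

From HB Require Import structures.
From mathcomp Require Import all_boot all_order all_algebra.
From mathcomp Require Import all_classical all_reals all_analysis.
Set Implicit Arguments. Unset Strict Implicit. Unset Printing Implicit Defensive.
Import Order.TTheory GRing.Theory Num.Theory.
Import numFieldNormedType.Exports.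
Local Open Scope ring_scope.

Definition dotv (R : realType) (d : nat) (u v : 'rV[R]_d) : R :=
  \sum_(i < d) u ord0 i * v ord0 i.

Definition enorm (R : realType) (d : nat) (u : 'rV[R]_d) : R :=
  Num.sqrt (dotv u u).

(* Functions on S^1 = R/Z are 1-periodic functions on R. *)
Definition periodic1 (R : realType) (T : Type) (f : R -> T) : Prop :=
  forall s : R, f (s + 1) = f s.

(* In the oriented plane with orthonormal basis (e1, e2), the normal to a
   tangent vector T obtained by rotating T by +pi/2 :
   T = a e1 + b e2  |->  a e2 - b e1. *)
Definition plane_normal (R : realType) (d : nat) (e1 e2 T : 'rV[R]_d) : 'rV[R]_d :=
  dotv T e1 *: e2 - dotv T e2 *: e1.

From HB Require Import structures.
From mathcomp Require Import all_boot all_order all_algebra.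
From mathcomp Require Import all_classical all_reals all_analysis.
From mathcomp Require Import ring lra.
Import Order.TTheory GRing.Theory Num.Theory.
Import numFieldNormedType.Exports.
Local Open Scope ring_scope.

(** Write T = ξ' and A = ξ''. The equation reads σ'T + σA = -ξ, and |T| = 1
    gives T ⊥ A. The "angular momentum" σ ξ∧T is constant, since its
    derivative is σ T∧T + ξ∧(σT)' = -ξ∧ξ = 0. At a maximum m of |ξ|² the
    vectors ξ(m) and T(m) are orthogonal and non-zero and σ(m) ≠ 0, so the
    momentum is a non-zero simple bivector: ξ and T stay in the plane it
    spans, hence so does A. In that plane A = kN with N the rotated tangent,
    and pairing the equation with N gives σk = -ξ·N; so the component
    -σ ξ·N = σ²k of the momentum, made positive by orienting the plane,
    forces k > 0. *)

Section Dotv.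
Context {R : realType} {d : nat}.
Implicit Types u v w : 'rV[R]_d.

Lemma dotvC u v : dotv u v = dotv v u.
Proof. by apply: eq_bigr => i _; rewrite mulrC. Qed.

Lemma dotvDr u v w : dotv u (v + w) = dotv u v + dotv u w.
Proof. by rewrite /dotv -big_split; apply: eq_bigr => i _; rewrite mxE mulrDr. Qed.

Lemma dotvZr a u v : dotv u (a *: v) = a * dotv u v.
Proof. by rewrite /dotv mulr_sumr; apply: eq_bigr => i _; rewrite mxE mulrCA. Qed.

Lemma dotvNr u v : dotv u (- v) = - dotv u v.
Proof. by rewrite -scaleN1r dotvZr mulN1r. Qed.

Lemma dotvBr u v w : dotv u (v - w) = dotv u v - dotv u w.
Proof. by rewrite dotvDr dotvNr. Qed.

Lemma dotvDl u v w : dotv (v + w) u = dotv v u + dotv w u.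
Proof. by rewrite dotvC dotvDr !(dotvC u). Qed.

Lemma dotvZl a u v : dotv (a *: v) u = a * dotv v u.
Proof. by rewrite dotvC dotvZr dotvC. Qed.

Lemma dotvNl u v : dotv (- v) u = - dotv v u.
Proof. by rewrite dotvC dotvNr dotvC. Qed.

Lemma dotvBl u v w : dotv (v - w) u = dotv v u - dotv w u.
Proof. by rewrite dotvDl dotvNl. Qed.

Lemma dotv0r u : dotv u 0 = 0.
Proof. by rewrite /dotv big1 // => i _; rewrite mxE mulr0. Qed.

Lemma dotv_ge0 u : 0 <= dotv u u.
Proof. by rewrite /dotv sumr_ge0 // => i _; rewrite -expr2 sqr_ge0. Qed.

Lemma dotv_eq0 u : (dotv u u == 0) = (u == 0).
Proof.
apply/idP/eqP => [|->]; last by rewrite dotv0r.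
rewrite /dotv psumr_eq0 => [/allP u0|i _]; last by rewrite -expr2 sqr_ge0.
apply/matrixP => i j; rewrite (ord1 i) mxE.
by have /(_ (mem_index_enum j)) := u0 j; rewrite -expr2 sqrf_eq0 => /eqP.
Qed.

Lemma sqr_enorm u : enorm u ^+ 2 = dotv u u.
Proof. exact/sqr_sqrtr/dotv_ge0. Qed.

End Dotv.

(* The (v, w)-component of the bivector x∧y, for v, w orthonormal. *)
Definition wedge {R : realType} {d : nat} (v w x y : 'rV[R]_d) : R :=
  dotv x v * dotv y w - dotv x w * dotv y v.

Definition in_plane {R : realType} {d : nat} (e1 e2 u : 'rV[R]_d) : Prop :=
  forall w, dotv e1 w = 0 -> dotv e2 w = 0 -> dotv u w = 0.

Section Plane.
Context {R : realType} {d : nat}.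
Implicit Types v w x y : 'rV[R]_d.

Lemma dotv_plane_normal v w y : dotv y (plane_normal v w y) = 0.
Proof. by rewrite /plane_normal dotvBr !dotvZr mulrC subrr. Qed.

Lemma wedge_plane_normal v w x y : wedge v w x y = - dotv x (plane_normal v w y).
Proof. by rewrite /wedge /plane_normal dotvBr !dotvZr !(dotvC y); ring. Qed.

Lemma wedge_dotv_eq0 v1 v2 w x y : wedge v1 v2 x y != 0 ->
  wedge v1 w x y = 0 -> wedge v2 w x y = 0 -> dotv x w = 0 /\ dotv y w = 0.
Proof.
move=> D0 W1 W2.
have ex : dotv x w * wedge v1 v2 x y = dotv x v2 * wedge v1 w x y - dotv x v1 * wedge v2 w x y.
  by rewrite /wedge; ring.
have ey : dotv y w * wedge v1 v2 x y = dotv y v2 * wedge v1 w x y - dotv y v1 * wedge v2 w x y.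
  by rewrite /wedge; ring.
rewrite W1 W2 !mulr0 subrr in ex ey.
by split; apply/eqP; rewrite -(mulIr_eq0 _ (mulIf D0)) ?ex ?ey.
Qed.

Variables e1 e2 : 'rV[R]_d.
Hypotheses (e11 : dotv e1 e1 = 1) (e22 : dotv e2 e2 = 1) (e12 : dotv e1 e2 = 0).

Lemma in_plane_decomp u : in_plane e1 e2 u -> u = dotv u e1 *: e1 + dotv u e2 *: e2.
Proof.
move=> uP; set r := u - dotv u e1 *: e1 - dotv u e2 *: e2.
have r1 : dotv e1 r = 0 by rewrite /r !dotvBr !dotvZr e11 (dotvC e1 u) e12; ring.
have r2 : dotv e2 r = 0.
  by rewrite /r !dotvBr !dotvZr e22 (dotvC e2 u) (dotvC e2 e1) e12; ring.
have /eqP : dotv r r = 0 by rewrite {1}/r !dotvBl !dotvZl uP // r1 r2; ring.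
by rewrite dotv_eq0 /r subr_eq0 subr_eq addrC => /eqP.
Qed.

Lemma in_plane_normal T A : in_plane e1 e2 T -> in_plane e1 e2 A ->
  dotv T T = 1 -> dotv T A = 0 ->
  A = dotv A (plane_normal e1 e2 T) *: plane_normal e1 e2 T.
Proof.
move=> /in_plane_decomp HT /in_plane_decomp HA TT TA.
set b1 := dotv T e1; set b2 := dotv T e2; set p := dotv A e1; set q := dotv A e2.
have hb : b1 * b1 + b2 * b2 = 1 by rewrite -TT {2}HT dotvDr !dotvZr.
have hbpq : b1 * p + b2 * q = 0 by rewrite -TA HA dotvDr !dotvZr -/b1 -/b2 mulrC [q * _]mulrC.
rewrite /plane_normal -/b1 -/b2 dotvBr !dotvZr -/p -/q.
set k := b1 * q - b2 * p.
have kb1 : k * b1 = q.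
  apply/eqP; rewrite -subr_eq0.
  have -> : k * b1 - q = - b2 * (b1 * p + b2 * q) - q * (1 - (b1 * b1 + b2 * b2)).
    by rewrite /k; ring.
  by rewrite hbpq hb subrr !mulr0 subrr.
have kb2 : k * b2 = - p.
  apply/eqP; rewrite -addr_eq0.
  have -> : k * b2 + p = b1 * (b1 * p + b2 * q) + p * (1 - (b1 * b1 + b2 * b2)).
    by rewrite /k; ring.
  by rewrite hbpq hb subrr !mulr0 addr0.
by rewrite {1}HA scalerBr !scalerA kb1 kb2 scaleNr opprK addrC.
Qed.

End Plane.

Section RowDerivatives.
Context {R : realType} {d : nat}.
Implicit Types (s : R) (F G : R -> 'rV[R]_d) (f : R -> R).

Lemma is_derive_row_coord {F s dF} i :
  is_derive s 1 F dF -> is_derive s 1 (fun t => F t ord0 i) (dF ord0 i).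
Proof.
move=> [dv <-]; apply: DeriveDef; first exact: (derivable_mxP F s 1).1.
by rewrite derive_mx // mxE.
Qed.

Lemma is_derive_dotv {F G s dF dG} : is_derive s 1 F dF -> is_derive s 1 G dG ->
  is_derive s 1 (fun t => dotv (F t) (G t)) (dotv dF (G s) + dotv (F s) dG).
Proof.
move=> hF hG.
have -> : (fun t => dotv (F t) (G t)) =
    \sum_(i < d) ((fun t => F t ord0 i) * (fun t => G t ord0 i)).
  by apply/funext => t; rewrite /dotv fct_sumE.
apply: is_derive_eq.
  by apply: is_derive_sum => i; apply: is_deriveM; exact: is_derive_row_coord.
rewrite /dotv -big_split /=; apply: eq_bigr => i _.
by rewrite /GRing.scale /= addrC [G s _ _ * _]mulrC.
Qed.

Lemma is_derive_dotvr w {F s dF} :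
  is_derive s 1 F dF -> is_derive s 1 (fun t => dotv (F t) w) (dotv dF w).
Proof.
move=> hF; apply: is_derive_eq; first exact: is_derive_dotv hF (is_derive_cst w s 1).
by rewrite dotv0r addr0.
Qed.

Lemma is_derive_scale {f F s df dF} : is_derive s 1 f df -> is_derive s 1 F dF ->
  is_derive s 1 (fun t => f t *: F t) (df *: F s + f s *: dF).
Proof.
move=> hf hF.
have hc i j : is_derive s 1 (fun t => (f t *: F t) i j) (df * F s i j + f s * dF i j).
  rewrite (ord1 i).
  have -> : (fun t => (f t *: F t) ord0 j) = f * (fun t => F t ord0 j).
    by apply/funext => t; rewrite mxE.
  apply: is_derive_eq; first by apply: is_deriveM => //; exact: is_derive_row_coord.
  by rewrite /GRing.scale /= addrC mulrC.
have dv : derivable (fun t => f t *: F t) s 1.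
  by apply/derivable_mxP => i j; have [] := hc i j.
apply: DeriveDef => //; rewrite derive_mx //; apply/matrixP => i j.
by rewrite !mxE; exact: derive_val.
Qed.

Lemma in_plane_derive {e1 e2 F s dF} :
  (forall t, in_plane e1 e2 (F t)) -> is_derive s 1 F dF -> in_plane e1 e2 dF.
Proof.
move=> FP hF w w1 w2.
have Fw0 : (fun t => dotv (F t) w) = cst 0 by apply/funext => t; exact: FP.
by have [_ <-] := is_derive_dotvr w hF; rewrite Fw0 derive_cst.
Qed.

End RowDerivatives.

Lemma periodic_local_max {R : realType} (f : R -> R) :
  periodic1 f -> (forall t, derivable f t 1) ->
  exists m, (\forall t \near m, f t <= f m) /\ is_derive m 1 f 0.
Proof.
move=> fper fd.
have le02 : (0 : R) <= 2 by lra.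
have cf : {within `[0, 2], continuous f}%classic.
  by apply: derivable_within_continuous => t _; exact: fd.
have [c c02 cmax] := EVT_max le02 cf.
have [m m02 fm] : exists2 m, m \in `]0, 2[ & f m = f c.
  have in1 : (1 : R) \in `]0, 2[ by rewrite in_itv /=; apply/andP; split; lra.
  have [->|c0] := eqVneq c 0; first by exists 1 => //; rewrite -[1]add0r fper.
  have [->|c2] := eqVneq c 2.
    by exists 1 => //; rewrite -fper (_ : 1 + 1 = 2) //; lra.
  by exists c => //; rewrite in_itv /= !lt_neqAle eq_sym c0 c2 /=; rewrite in_itv in c02.
have mmax t : t \in `]0, 2[ -> f t <= f m.
  rewrite fm => /[!in_itv] /= /andP [t0 t2]; apply: cmax.
  by rewrite in_itv /=; apply/andP; split; lra.
exists m; split; last exact: derive1_at_max le02 (fun t _ => fd t) m02 mmax.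
exact: filterS mmax (near_in_itvoo m02).
Qed.

Section Curve.
Context {R : realType} {d : nat} {xi : R -> 'rV[R]_d} {sigma : R -> R}.
Implicit Types s t : R.
Local Notation T := (derive1 xi).
Local Notation A := (derive1 (derive1 xi)).
Hypothesis xi_per : periodic1 xi.
Hypothesis xi_d1 : forall s, derivable xi s 1.
Hypothesis xi_d2 : forall s, derivable T s 1.
Hypothesis sigma_d1 : forall s, derivable sigma s 1.
Hypothesis heq : forall s, derive1 (fun t => sigma t *: T t) s + xi s = 0.
Hypothesis hunit : forall s, enorm (T s) = 1.

Lemma is_derive_curve s : is_derive s 1 xi (T s).
Proof. by rewrite derive1E; exact: derivableP. Qed.

Lemma is_derive_tangent s : is_derive s 1 T (A s).
Proof. by rewrite [A s]derive1E; exact: derivableP. Qed.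

Lemma is_derive_sigma s : is_derive s 1 sigma (derive1 sigma s).
Proof. by rewrite derive1E; exact: derivableP. Qed.

Lemma tangent_unit s : dotv (T s) (T s) = 1.
Proof. by rewrite -sqr_enorm hunit expr1n. Qed.

Lemma curve_eq s : derive1 sigma s *: T s + sigma s *: A s = - xi s.
Proof.
have [_ hD] := is_derive_scale (is_derive_sigma s) (is_derive_tangent s).
by apply/eqP; rewrite -addr_eq0 -hD -derive1E heq.
Qed.

Lemma dotv_tangent_curvature s : dotv (T s) (A s) = 0.
Proof.
have [_] := is_derive_dotv (is_derive_tangent s) (is_derive_tangent s).
have -> : (fun t => dotv (T t) (T t)) = cst 1 by apply/funext => t; exact: tangent_unit.
by rewrite derive_cst (dotvC (A s)) => /esym/eqP; rewrite -mulr2n mulrn_eq0 => /eqP.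
Qed.

Definition momentum v w s := sigma s * wedge v w (xi s) (T s).

Lemma is_derive_sigma_tangent w s :
  is_derive s 1 (fun t => sigma t * dotv (T t) w) (- dotv (xi s) w).
Proof.
apply: is_derive_eq.
  exact: is_deriveM (is_derive_sigma s) (is_derive_dotvr w (is_derive_tangent s)).
by rewrite -dotvNl -curve_eq dotvDl !dotvZl /GRing.scale /= addrC mulrC.
Qed.

Lemma momentum_const v w s s' : momentum v w s = momentum v w s'.
Proof.
have -> : momentum v w = (fun t => dotv (xi t) v) * (fun t => sigma t * dotv (T t) w)
    - (fun t => dotv (xi t) w) * (fun t => sigma t * dotv (T t) v).
  by apply/funext => t; rewrite /momentum /wedge !fctE; ring.
apply: is_derive_0_is_cst => t.
have xv := is_derive_dotvr v (is_derive_curve t).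
have xw := is_derive_dotvr w (is_derive_curve t).
apply: is_derive_eq.
  exact: is_deriveB (is_deriveM xv (is_derive_sigma_tangent w t))
                    (is_deriveM xw (is_derive_sigma_tangent v t)).
by rewrite /GRing.scale /=; ring.
Qed.

Lemma exists_normal_point :
  exists m, [/\ dotv (xi m) (T m) = 0, xi m != 0 & sigma m != 0].
Proof.
pose phi t := dotv (xi t) (xi t).
have dphi t := is_derive_dotv (is_derive_curve t) (is_derive_curve t).
have [m [mmax dm]] : exists m, (\forall t \near m, phi t <= phi m) /\ is_derive m 1 phi 0.
  apply: periodic_local_max => [s|t]; first by rewrite /phi xi_per.
  by have [] := dphi t.
have xT : dotv (xi m) (T m) = 0.
  have [_] := dphi m; have [_ ->] := dm; rewrite (dotvC (T m)) => /esym/eqP.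
  by rewrite -mulr2n mulrn_eq0 => /eqP.
have xi0 : xi m != 0.
  apply/eqP => xm0.
  have xi_near0 : \forall t \near m, cst 0 t = xi t.
    apply: filterS mmax => t; rewrite /phi xm0 dotv0r => tle.
    by apply/esym/eqP; rewrite -dotv_eq0 eq_le tle dotv_ge0.
  have [_ Tm0] := near_eq_is_derive xi_near0 (is_derive_cst 0 m 1).
  by have := tangent_unit m; rewrite derive1E Tm0 dotv0r => /eqP; rewrite eq_sym oner_eq0.
exists m; split=> //; apply: contra_neq xi0 => sm0.
have := congr1 (fun v => dotv v (xi m)) (curve_eq m).
rewrite /= dotvDl !dotvZl dotvNl sm0 mul0r addr0 (dotvC (T m)) xT mulr0.
by move=> /esym/eqP; rewrite oppr_eq0 dotv_eq0 => /eqP.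
Qed.

Lemma exists_momentum_frame : exists m e1 e2,
  [/\ dotv e1 e1 = 1, dotv e2 e2 = 1, dotv e1 e2 = 0, 0 < momentum e1 e2 m &
      in_plane e1 e2 (xi m) /\ in_plane e1 e2 (T m)].
Proof.
have [m [xT xi0 sm0]] := exists_normal_point.
have n0 : 0 < enorm (xi m).
  by rewrite sqrtr_gt0 lt_neqAle dotv_ge0 andbT eq_sym dotv_eq0.
(* The sign of sigma m orients the plane so that the momentum is positive. *)
set n := enorm (xi m) in n0; set c := Num.sg (sigma m) / n.
have c0 : c != 0 by rewrite /c mulf_eq0 invr_eq0 sgr_eq0 (negbTE sm0) (gt_eqF n0).
have xe1 : dotv (xi m) (c *: xi m) = Num.sg (sigma m) * n.
  by rewrite dotvZr -sqr_enorm -/n /c; field; rewrite gt_eqF.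
exists m, (c *: xi m), (T m); split=> //; last split=> [w|w _ //].
- by rewrite dotvZl xe1 /c mulrACA mulVf ?gt_eqF // mulr1 -expr2 sqr_sg sm0.
- exact: tangent_unit.
- by rewrite dotvZl xT mulr0.
- rewrite /momentum /wedge xe1 tangent_unit xT mul0r subr0 mulr1.
  by rewrite mulrA [sigma m * _]mulrC -normrEsg mulr_gt0 ?normr_gt0.
- by rewrite dotvZl => /eqP; rewrite mulf_eq0 (negbTE c0) => /eqP.
Qed.

Lemma momentum_planar {e1 e2 m} : 0 < momentum e1 e2 m ->
  in_plane e1 e2 (xi m) -> in_plane e1 e2 (T m) ->
  forall s, in_plane e1 e2 (xi s) /\ in_plane e1 e2 (T s).
Proof.
move=> Lm xim Tm s.
suff perp w : dotv e1 w = 0 -> dotv e2 w = 0 -> dotv (xi s) w = 0 /\ dotv (T s) w = 0.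
  by split=> w w1 w2; have [] := perp w w1 w2.
move=> w1 w2.
have Ls : 0 < momentum e1 e2 s by rewrite (momentum_const _ _ s m).
have sigma0 : sigma s != 0 by apply: contraTneq Ls => s0; rewrite /momentum s0 mul0r ltxx.
have wedge0 v : wedge v w (xi s) (T s) = 0.
  have : momentum v w s = 0.
    rewrite (momentum_const _ _ s m) /momentum /wedge (xim w w1 w2) (Tm w w1 w2).
    by rewrite mulr0 mul0r subrr mulr0.
  by rewrite /momentum => /eqP; rewrite mulf_eq0 (negbTE sigma0) => /eqP.
apply: (wedge_dotv_eq0 e1 e2); rewrite ?wedge0 //.
by apply: contraTneq Ls => D0; rewrite /momentum D0 mulr0 ltxx.
Qed.

Lemma curvature_pos {e1 e2 s} :
  dotv e1 e1 = 1 -> dotv e2 e2 = 1 -> dotv e1 e2 = 0 ->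
  0 < momentum e1 e2 s -> in_plane e1 e2 (T s) -> in_plane e1 e2 (A s) ->
  exists k, 0 < k /\ A s = k *: plane_normal e1 e2 (T s).
Proof.
move=> e11 e22 e12 Ls Ts As.
exists (dotv (A s) (plane_normal e1 e2 (T s))); split; last first.
  exact: in_plane_normal (tangent_unit s) (dotv_tangent_curvature s).
have hk : sigma s * dotv (A s) (plane_normal e1 e2 (T s))
          = - dotv (xi s) (plane_normal e1 e2 (T s)).
  have := congr1 (fun v => dotv v (plane_normal e1 e2 (T s))) (curve_eq s).
  by rewrite /= dotvDl !dotvZl dotvNl dotv_plane_normal mulr0 add0r.
move: Ls; rewrite /momentum wedge_plane_normal -hk mulrA; nra.
Qed.

End Curve.

Theorem proposition3p8 (R : realType) (d : nat) (hd : (2 <= d)%N)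
  (xi : R -> 'rV[R]_d) (sigma : R -> R)
  (* xi in C^2(S^1; R^d) *)
  (xi_per : periodic1 xi)
  (xi_d1 : forall s, derivable xi s 1)
  (xi_d2 : forall s, derivable (derive1 xi) s 1)
  (xi_c2 : continuous (derive1 (derive1 xi)))
  (* sigma in C^1(S^1; R) *)
  (sigma_per : periodic1 sigma)
  (sigma_d1 : forall s, derivable sigma s 1)
  (sigma_c1 : continuous (derive1 sigma))
  (* d/ds (sigma d/ds xi) + xi = 0 and |d/ds xi| = 1 *)
  (heq : forall s, derive1 (fun t => sigma t *: derive1 xi t) s + xi s = 0)
  (hunit : forall s, enorm (derive1 xi s) = 1) :
  exists (p e1 e2 : 'rV[R]_d),
    [/\ dotv e1 e1 = 1, dotv e2 e2 = 1, dotv e1 e2 = 0,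
        (forall s, exists a b : R, xi s = p + a *: e1 + b *: e2) &
        (forall s, exists k : R,
            0 < k /\ derive1 (derive1 xi) s = k *: plane_normal e1 e2 (derive1 xi s))].
Proof.
have [m [e1 [e2 [e11 e22 e12 Lm [xim Tm]]]]] :=
  exists_momentum_frame xi_per xi_d1 xi_d2 sigma_d1 heq hunit.
have planar := momentum_planar xi_d1 xi_d2 sigma_d1 heq Lm xim Tm.
exists 0, e1, e2; split=> // s.
  exists (dotv (xi s) e1), (dotv (xi s) e2).
  by rewrite add0r -in_plane_decomp //; exact: (planar s).1.
apply: (curvature_pos xi_d2 sigma_d1 heq hunit e11 e22 e12).
- by rewrite (momentum_const xi_d1 xi_d2 sigma_d1 heq _ _ s m).
- exact: (planar s).2.
- exact: in_plane_derive (fun t => (planar t).2) (is_derive_tangent xi_d2 s).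
Qed.
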